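(* Let $m_1,m_2$ be positive integers. If $\Delta(\mathcal{T},m_1)$ and $\Delta(\mathcal{T},m_2)$ are isomorphic as unlabelled directed graphs, then $m_1=m_2$.
   Context: A quasi-array of size $m$ is an array $Q$ with cells $(i,j)$, $1\le i\le m$, $1\le j\le m-i+1$, each containing a positive integer $Q_{(i,j)}$, with $Q_{(1,j)}\le Q_{(1,j+1)}$ and $Q_{(i,j)}=Q_{(1,i+j-1)}+i-1$. The $k$-th diagonal is the set of cells $(i,j)$ with $i+j-1=k$. For $Q$ of size $m$: $D_m$ is always defined and adds $1$ to every entry of the $m$-th diagonal; for $1\le k\le m-1$, $D_k$ is defined iff $Q_{(1,k)}<Q_{(1,k+1)}$, and then adds $1$ to every entry of the $k$-th diagonal; $D_k$ is undefined for $k>m$. $\Delta(\mathcal{T},m)$ is the directed graph whose vertices are the quasi-arrays of size $m$, with an edge $Q\to D_k(Q)$ labelled $k$ whenever $D_k$ is defined on $Q$. *)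

From mathcomp Require Import all_boot.
Set Implicit Arguments. Unset Strict Implicit. Unset Printing Implicit Defensive.

(* An array is a function (i, j) |-> entry, 1-indexed. *)
Definition array := nat -> nat -> nat.

Definition is_cell (m i j : nat) : bool :=
  [&& 1 <= i, i <= m, 1 <= j & j <= m - i + 1].

(* Quasi-array of size m.  Entries outside the cells are normalised to 0
   so that a quasi-array is exactly its family of cell entries. *)
Definition is_quasi_array (m : nat) (Q : array) : Prop :=
  (forall i j, is_cell m i j -> 0 < Q i j) /\
  (forall j, 1 <= j -> j < m -> Q 1 j <= Q 1 j.+1) /\
  (forall i j, is_cell m i j -> Q i j = Q 1 (i + j - 1) + (i - 1)) /\
  (forall i j, ~~ is_cell m i j -> Q i j = 0).

Definition quasi_array (m : nat) := {Q : array | is_quasi_array m Q}.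

Definition D_defined (m k : nat) (Q : array) : Prop :=
  k = m \/ (1 <= k /\ k <= m - 1 /\ Q 1 k < Q 1 k.+1).

Definition D (m k : nat) (Q : array) : array :=
  fun i j => if is_cell m i j && (i + j - 1 == k) then (Q i j).+1 else Q i j.

Definition Delta_edge (m : nat) (P Q : quasi_array m) : Prop :=
  exists k, D_defined m k (proj1_sig P) /\ proj1_sig Q = D m k (proj1_sig P).

Definition Delta_isomorphic (m1 m2 : nat) : Prop :=
  exists f : quasi_array m1 -> quasi_array m2,
    bijective f /\
    forall P Q, Delta_edge P Q <-> Delta_edge (f P) (f Q).

(* Out-edges of a vertex Q of Delta(T, m) are labelled by k in {1, ..., m}, and
   distinct labels give distinct targets D_k(Q), so every vertex has out-degree
   at most m; the quasi-array with first row 1, 2, ..., m has all m operators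
   defined, hence out-degree exactly m.  An injective edge-preserving map from
   Delta(T, m2) to Delta(T, m1) sends its m2 out-neighbours to distinct
   out-neighbours of a single vertex, so m2 <= m1, and an isomorphism gives
   both inequalities. *)

From Stdlib Require Import ClassicalEpsilon ProofIrrelevance.
From mathcomp Require Import all_boot zify.

Set Implicit Arguments.
Unset Strict Implicit.
Unset Printing Implicit Defensive.

Lemma leq_card_rel (T1 T2 : finType) (R : T1 -> T2 -> Prop) :
  (forall x, exists y, R x y) -> (forall x x' y, R x y -> R x' y -> x = x') ->
  #|T1| <= #|T2|.
Proof.
move=> Rtotal Rinj.
pose h x := proj1_sig (constructive_indefinite_description _ (Rtotal x)).
have hR x : R x (h x) by rewrite /h; case: constructive_indefinite_description.
apply: (@leq_card _ _ h) => x x' hxx'.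
by apply: (Rinj x x' (h x)); rewrite // hxx'.
Qed.

Lemma quasi_array_inj m : injective (@proj1_sig _ (is_quasi_array m)).
Proof. by move=> P Q PQ; apply: eq_sig_hprop => // *; exact: proof_irrelevance. Qed.

Lemma is_cell1 m j : is_cell m 1 j = (1 <= j <= m).
Proof. by rewrite /is_cell; apply/and4P/andP => [[]|[]]; split; lia. Qed.

Lemma is_cell_diag m i j : is_cell m i j -> is_cell m 1 (i + j - 1).
Proof. by rewrite is_cell1 => /and4P[]; lia. Qed.

Lemma D_row1 m k Q j : 1 <= j <= m -> D m k Q 1 j = Q 1 j + (j == k).
Proof. by rewrite /D is_cell1 add1n subn1 => ->; case: eqP => _; rewrite ?addn1 ?addn0. Qed.

Lemma D_quasi_array m k Q :
  is_quasi_array m Q -> D_defined m k Q -> is_quasi_array m (D m k Q).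
Proof.
move=> [Qpos [Qmono [Qdiag Qout]]] Dk; split; [|split; [|split]].
- by move=> i j cij; rewrite /D cij /=; case: ifP => // _; exact: Qpos.
- move=> j j1 jm; have := Qmono j j1 jm; rewrite !D_row1; try lia.
  case: eqP => [jk | _]; last lia.
  by subst j; case: Dk => [km | [_ [_ Qk]]]; lia.
- move=> i j cij; rewrite /D cij (is_cell_diag cij) Qdiag //.
  by rewrite addKn; case: ifP.
- by move=> i j /negbTE cij; rewrite /D cij; apply: Qout; rewrite cij.
Qed.

Lemma D_label_inj m k k' Q :
  1 <= k <= m -> 1 <= k' <= m -> D m k Q = D m k' Q -> k = k'.
Proof.
move=> km k'm /(congr1 (fun A => A 1 k)); rewrite !D_row1 // eqxx.
by case: eqP => // _; lia.
Qed.

Lemma D_defined_label m k Q : 0 < m -> D_defined m k Q -> 1 <= k <= m.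
Proof. by move=> m_gt0 [->|[k1 [km _]]]; lia. Qed.

Definition staircase (m : nat) : array :=
  fun i j => if is_cell m i j then (i + j - 1) + (i - 1) else 0.

Lemma staircase_quasi_array m : is_quasi_array m (staircase m).
Proof.
rewrite /staircase; split; [|split; [|split]].
- by move=> i j cij; rewrite cij; case/and4P: cij; lia.
- by move=> j j1 jm; rewrite !is_cell1; case: ifP; case: ifP; lia.
- move=> i j cij; rewrite cij (is_cell_diag cij); lia.
- by move=> i j /negbTE ->.
Qed.

Lemma staircase_D_defined m k : 1 <= k <= m -> D_defined m k (staircase m).
Proof.
move=> km; case: (eqVneq k m) => [->|k_neq_m]; [by left | right].
rewrite /staircase !is_cell1; split; [lia | split; [lia|]].
by case: ifP; case: ifP; lia.
Qed.

Definition staircase_qa m : quasi_array m :=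
  exist _ (staircase m) (staircase_quasi_array m).

Lemma staircase_succ_proof m (i : 'I_m) : is_quasi_array m (D m i.+1 (staircase m)).
Proof.
apply: D_quasi_array (staircase_quasi_array m) (staircase_D_defined _).
by rewrite ltn_ord.
Qed.

Definition staircase_succ m (i : 'I_m) : quasi_array m :=
  exist _ (D m i.+1 (staircase m)) (staircase_succ_proof i).

Lemma staircase_edge m (i : 'I_m) : Delta_edge (staircase_qa m) (staircase_succ i).
Proof. exists i.+1; split => //; apply: staircase_D_defined; exact: ltn_ord. Qed.

Lemma Delta_embedding_leq m1 m2 (g : quasi_array m2 -> quasi_array m1) :
  0 < m1 -> injective g ->
  (forall P Q, Delta_edge P Q -> Delta_edge (g P) (g Q)) -> m2 <= m1.
Proof.
move=> m1_gt0 g_inj g_edge.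
pose R (i : 'I_m2) (k : 'I_m1) :=
  proj1_sig (g (staircase_succ i)) = D m1 k.+1 (proj1_sig (g (staircase_qa m2))).
rewrite -[m2]card_ord -[m1]card_ord; apply: (@leq_card_rel _ _ R).
- move=> i; have [k [Dk g_succ]] := g_edge _ _ (staircase_edge i).
  have /andP[k_gt0 km] := D_defined_label m1_gt0 Dk.
  have k_lt : k.-1 < m1 by lia.
  by exists (Ordinal k_lt); rewrite /R g_succ /= prednK.
- move=> i i' k; rewrite /R => <- /quasi_array_inj /g_inj /(congr1 (@proj1_sig _ _)) /=.
  move/D_label_inj; rewrite !ltn_ord => /(_ isT isT) [ii'].
  exact: val_inj.
Qed.

Theorem proposition4p3 (m1 m2 : nat) :
  0 < m1 -> 0 < m2 -> Delta_isomorphic m1 m2 -> m1 = m2.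
Proof.
move=> m1_gt0 m2_gt0 [f [[g fK gK] f_edge]].
apply/eqP; rewrite eqn_leq; apply/andP; split.
- apply: (Delta_embedding_leq m2_gt0 (can_inj fK)).
  by move=> P Q /f_edge.
- apply: (Delta_embedding_leq m1_gt0 (can_inj gK)).
  by move=> P Q PQ; apply/f_edge; rewrite !gK.
Qed.
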